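(* Let $G$ be a $(P_7, C_4, \text{gem})$-free graph that contains a $7$-hole $C$. Then some vertex of $C$ is a bisimplicial vertex of $G$.
   Context: All graphs are finite and simple. $G$ is $H$-free if it has no induced subgraph isomorphic to $H$; $P_t$, $C_t$ are the path and cycle on $t$ vertices; a gem is an induced $P_4$ plus a vertex adjacent to all four of its vertices. A $k$-hole is an induced cycle of length $k$. A vertex is bisimplicial if its neighbourhood is the union of two cliques. *)

From mathcomp Require Import all_boot.
Set Implicit Arguments. Unset Strict Implicit. Unset Printing Implicit Defensive.


Definition simple_graph (T : finType) (e : rel T) : Prop :=
  symmetric e /\ irreflexive e.

Definition path_adj (t : nat) : rel 'I_t :=
  fun i j => (i.+1 == j :> nat) || (j.+1 == i :> nat).
Definition cycle_adj (t : nat) : rel 'I_t :=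
  fun i j => (i.+1 %% t == j :> nat) || (j.+1 %% t == i :> nat).
Definition gem_adj : rel 'I_5 :=
  fun i j => ((i < 4) && (j < 4) && path_adj (i : 'I_5) j)
          || ((i == 4 :> nat) && (j < 4)) || ((j == 4 :> nat) && (i < 4)).

Definition induced_copy (T : finType) (e : rel T) (k : nat) (h : rel 'I_k)
    (f : 'I_k -> T) : Prop :=
  injective f /\ forall i j : 'I_k, e (f i) (f j) = h i j.

Definition H_free (T : finType) (e : rel T) (k : nat) (h : rel 'I_k) : Prop :=
  forall f : 'I_k -> T, ~ induced_copy e h f.

Definition clique (T : finType) (e : rel T) (A : {set T}) : Prop :=
  forall x y, x \in A -> y \in A -> x != y -> e x y.

Definition nbhd (T : finType) (e : rel T) (v : T) : {set T} := [set u | e v u].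

Definition bisimplicial (T : finType) (e : rel T) (v : T) : Prop :=
  exists A B : {set T}, clique e A /\ clique e B /\ nbhd e v = A :|: B.
Arguments path_adj t : clear implicits.
Arguments cycle_adj t : clear implicits.

From mathcomp Require Import all_boot.
Set Implicit Arguments. Unset Strict Implicit. Unset Printing Implicit Defensive.

(* Let c_0 ... c_6 be a 7-hole in a (P7, C4, gem)-free graph G, indices mod 7.
   Call an outside vertex x private to c_i if x ~ c_i but x is adjacent to
   neither c_(i-1) nor c_(i+1).  The proof has two halves.
   1. If no vertex is private to c_i, then N(c_i) is the union of the two
      sets {c_(i-1)} + N(c_i) /\ N(c_(i-1)) and {c_(i+1)} + N(c_i) /\ N(c_(i+1)),
      and both are cliques because any two common neighbours of a hole edge
      are adjacent; hence c_i is bisimplicial.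
   2. There is no family x_0, ..., x_6 with x_i private to c_i.
   Both facts are decided by a finite computation.  The trace of an outside
   vertex is its adjacency vector to the hole; a trace is admissible if the
   hole plus one vertex with this trace (8 vertices) has no induced P7, C4 or
   gem, and a pair of traces with a bit for their adjacency is admissible if
   the corresponding 9-vertex configuration has none.  Every outside vertex,
   and every pair of distinct outside vertices, of G yields admissible data.
   A certificate, checked by evaluation, states that (1') in every admissible
   pair, two vertices adjacent to both ends of a hole edge are adjacent, and
   (2') no choice of one trace private to each c_i is pairwise admissible. *)

(* Patterns read on natural-number indices; on ordinals they coincide with
   path_adj, cycle_adj and gem_adj by conversion. *)
Definition path_nat (i j : nat) : bool := (i.+1 == j) || (j.+1 == i).
Definition cycle_nat (t i j : nat) : bool := (i.+1 %% t == j) || (j.+1 %% t == i).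
Definition gem_nat (i j : nat) : bool :=
  ((i < 4) && (j < 4) && path_nat i j) || ((i == 4) && (j < 4)) || ((j == 4) && (i < 4)).

Definition extensions (h M : nat -> nat -> bool) (n : nat) (l : seq nat) :
    seq (seq nat) :=
  [seq rcons l v | v <- iota 0 n &
     (v \notin l) && all (fun j => M (nth 0 l j) v == h j (size l)) (iota 0 (size l))].

Definition embeddings (h M : nat -> nat -> bool) (n k : nat) : seq (seq nat) :=
  iter k (fun ls => flatten (map (extensions h M n) ls)) [:: [::]].

Definition contains_pattern (k : nat) (h M : nat -> nat -> bool) (n : nat) : bool :=
  embeddings h M n k != [::].

Definition pattern_free (n : nat) (M : nat -> nat -> bool) : bool :=
  [&& ~~ contains_pattern 7 path_nat M n, ~~ contains_pattern 4 (cycle_nat 4) M n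
    & ~~ contains_pattern 5 gem_nat M n].

Lemma embeddings_sound h M n k l : l \in embeddings h M n k ->
  [/\ size l = k, uniq l, all (fun v => v < n) l &
      forall i j, i < j -> j < k -> M (nth 0 l i) (nth 0 l j) = h i j].
Proof.
elim: k l => [|k IH] l.
  by rewrite inE => /eqP ->; split => // i j _; rewrite ltn0.
rewrite /embeddings iterS -/(embeddings h M n k) => /flatten_mapP [l0 /IH [s0 u0 a0 h0]].
case/mapP => v; rewrite mem_filter mem_iota add0n /=.
case/andP => /andP [vl /allP vh] vn ->; split.
- by rewrite size_rcons s0.
- by rewrite rcons_uniq vl u0.
- by rewrite all_rcons vn a0.
move=> i j ij; rewrite ltnS leq_eqVlt => /orP [/eqP jk | jk].
  have ik : i < size l0 by rewrite s0 -jk.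
  rewrite !nth_rcons ik s0 jk ltnn eqxx.
  by have := vh i; rewrite mem_iota add0n ik s0 => /(_ isT) /eqP.
by rewrite !nth_rcons s0 jk (ltn_trans ij jk); apply: h0.
Qed.

Definition realizes (T : finType) (e : rel T) (M : nat -> nat -> bool) (x0 : T)
    (vs : seq T) : Prop :=
  uniq vs /\
  forall a b, a < size vs -> b < size vs -> e (nth x0 vs a) (nth x0 vs b) = M a b.

Lemma induced_copy_of_search (T : finType) (e : rel T) k (h : rel 'I_k)
    (hn M : nat -> nat -> bool) (x0 : T) (vs : seq T) :
  simple_graph e -> symmetric h -> irreflexive h ->
  (forall i j : 'I_k, h i j = hn i j) -> realizes e M x0 vs ->
  contains_pattern k hn M (size vs) -> exists f, induced_copy e h f.
Proof.
move=> [eS eI] hS hI hE [vU vE]; rewrite /contains_pattern.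
case E: embeddings => [|l ls] // _.
have /embeddings_sound [sl ul /allP ln lE] : l \in embeddings hn M (size vs) k.
  by rewrite E mem_head.
have lt_n (i : 'I_k) : nth 0 l i < size vs by apply: ln; rewrite mem_nth ?sl.
exists (fun i => nth x0 vs (nth 0 l i)); split.
  move=> i j /eqP; rewrite nth_uniq ?lt_n // nth_uniq ?sl // => /eqP.
  exact: val_inj.
move=> i j; case: (ltngtP i j) => [ij | ji | /val_inj <-].
- by rewrite vE ?lt_n // lE // hE.
- by rewrite eS hS vE ?lt_n // lE // hE.
- by rewrite eI hI.
Qed.

Lemma path_adj_sym t : symmetric (path_adj t).
Proof. by move=> i j; rewrite /path_adj orbC. Qed.

Lemma path_adj_irr t : irreflexive (path_adj t).
Proof. by move=> i; rewrite /path_adj orbb gtn_eqF. Qed.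

Lemma cycle_adj_sym t : symmetric (cycle_adj t).
Proof. by move=> i j; rewrite /cycle_adj orbC. Qed.

Lemma cycle_adj_irr t : 1 < t -> irreflexive (cycle_adj t).
Proof.
move=> t_gt1 i; rewrite /cycle_adj orbb.
case: (ltngtP i.+1 t) => [i1t | | it]; first by rewrite modn_small // gtn_eqF.
  by rewrite ltnNge ltn_ord.
rewrite it modnn; apply/eqP => i0.
by rewrite -it -i0 in t_gt1.
Qed.

Lemma gem_adj_sym : symmetric gem_adj.
Proof.
by case=> [[|[|[|[|[|i]]]]] hi] [[|[|[|[|[|j]]]]] hj].
Qed.

Lemma gem_adj_irr : irreflexive gem_adj.
Proof. by case=> [[|[|[|[|[|i]]]]] hi]. Qed.

Lemma pattern_free_realized (T : finType) (e : rel T) (M : nat -> nat -> bool) x0 vs :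
  simple_graph e -> H_free e (path_adj 7) -> H_free e (cycle_adj 4) ->
  H_free e gem_adj -> realizes e M x0 vs -> pattern_free (size vs) M.
Proof.
move=> eS P7free C4free gemfree vsM.
have absent k (h : rel 'I_k) (hn : nat -> nat -> bool) : symmetric h -> irreflexive h ->
    (forall i j : 'I_k, h i j = hn i j) -> H_free e h ->
    ~~ contains_pattern k hn M (size vs).
  move=> hS hI hE hfree; apply/negP.
  by case/(induced_copy_of_search eS hS hI hE vsM) => f; apply: hfree.
apply/and3P; split.
- apply: (absent _ (path_adj 7)) => //; [exact: path_adj_sym | exact: path_adj_irr].
- apply: (absent _ (cycle_adj 4)) => //; [exact: cycle_adj_sym | exact: cycle_adj_irr].
- apply: (absent _ gem_adj) => //; [exact: gem_adj_sym | exact: gem_adj_irr].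
Qed.

Definition hole7 : nat -> nat -> bool := cycle_nat 7.
Definition prev7 (i : nat) : nat := (i + 6) %% 7.
Definition next7 (i : nat) : nat := i.+1 %% 7.

Lemma hole7_prev_next i : i < 7 ->
  [&& hole7 i (prev7 i), hole7 i (next7 i), prev7 i < 7 & next7 i < 7].
Proof. by do 7?[case: i => [|i] //]. Qed.

Lemma hole7_neighbours i j : i < 7 -> j < 7 -> hole7 i j ->
  (j == prev7 i) || (j == next7 i).
Proof. by do 7?[case: i => [|i] //]; do 7?[case: j => [|j] //]. Qed.

Lemma hole7_no_common_neighbour i j l : i < 7 -> j < 7 -> l < 7 ->
  hole7 i j -> hole7 l i -> hole7 l j -> False.
Proof.
by do 7?[case: i => [|i] //]; do 7?[case: j => [|j] //]; do 7?[case: l => [|l] //].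
Qed.

(* The configuration on {0, ..., 8}: the hole on 0..6, and two further
   vertices 7 and 8 whose adjacencies to the hole are given by the traces s
   and t, and which are adjacent iff b. *)
Definition config (s t : seq bool) (b : bool) (u w : nat) : bool :=
  if u < 7 then
    (if w < 7 then hole7 u w else if w == 7 then nth false s u else nth false t u)
  else if u == 7 then
    (if w < 7 then nth false s w else if w == 7 then false else b)
  else (if w < 7 then nth false t w else if w == 7 then b else false).

Fixpoint bitseqs (n : nat) : seq (seq bool) :=
  if n is n'.+1 then [seq b :: s | b <- [:: true; false], s <- bitseqs n']
  else [:: [::]].

Lemma bitseqs_complete s : s \in bitseqs (size s).
Proof.
elim: s => [|b s IH] //.
by apply: (allpairs_f (fun b s => b :: s)) => //; case: b.
Qed.

(* The traces a vertex outside the hole can have: the hole plus this vertex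
   (vertex 8 of the configuration is never looked at) is pattern free. *)
Definition admissible_traces : seq (seq bool) :=
  [seq s <- bitseqs 7 | pattern_free 8 (config s s false)].

Definition admissible_pairs_over (vt : seq (seq bool)) :
    seq (seq bool * seq bool * bool) :=
  [seq p <- [seq (st, b) | st <- [seq (s, t) | s <- vt, t <- vt], b <- [:: true; false]]
     | pattern_free 9 (config p.1.1 p.1.2 p.2)].

Definition admissible_pairs := admissible_pairs_over admissible_traces.

Definition private_to (i : nat) (s : seq bool) : bool :=
  [&& nth false s i, ~~ nth false s (prev7 i) & ~~ nth false s (next7 i)].

Definition edge_cliques_in (p : seq bool * seq bool * bool) : bool :=
  let: (s, t, b) := p in
  all (fun i => all (fun j =>
         [&& hole7 i j, nth false s i, nth false s j, nth false t i
           & nth false t j] ==> b)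
       (iota 0 7)) (iota 0 7).

Definition edge_cliques_ok (pairs : seq (seq bool * seq bool * bool)) : bool :=
  all edge_cliques_in pairs.

Definition compatible (pairs : seq (seq bool * seq bool * bool)) (s t : seq bool) :
    bool :=
  [|| s == t, (s, t, true) \in pairs | (s, t, false) \in pairs].

Fixpoint compatible_choice (pairs : seq (seq bool * seq bool * bool))
    (ps : seq (seq (seq bool))) (chosen : seq (seq bool)) : bool :=
  if ps is P :: ps' then
    has (fun s => all (compatible pairs s) chosen &&
                  compatible_choice pairs ps' (s :: chosen)) P
  else true.

Definition private_classes (vt : seq (seq bool)) : seq (seq (seq bool)) :=
  [seq [seq s <- vt | private_to i s] | i <- iota 0 7].

Definition certificate_holds (vt : seq (seq bool))
    (pairs : seq (seq bool * seq bool * bool)) : bool :=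
  edge_cliques_ok pairs && ~~ compatible_choice pairs (private_classes vt) [::].

(* Simplification must never try to evaluate the catalogues. *)
Arguments admissible_traces : simpl never.
Arguments admissible_pairs : simpl never.

(* The finite verification: the kernel evaluates the certificate at Qed time. *)
Lemma certificate : certificate_holds admissible_traces admissible_pairs.
Proof. vm_cast_no_check (erefl true). Qed.

Lemma edge_cliquesP pairs s t b i j : edge_cliques_ok pairs -> (s, t, b) \in pairs ->
  i < 7 -> j < 7 -> hole7 i j -> nth false s i -> nth false s j ->
  nth false t i -> nth false t j -> b.
Proof.
move=> /allP ok /ok /allP /(_ i) oki ilt jlt ij si sj ti tj.
move: oki; rewrite mem_iota ilt => /(_ isT) /allP /(_ j).
by rewrite mem_iota jlt ij si sj ti tj => /(_ isT).
Qed.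

Lemma all2_map_same (A B C : Type) (r : A -> B -> bool) (f : C -> A) (g : C -> B)
    (s : seq C) :
  all2 r (map f s) (map g s) = all (fun i => r (f i) (g i)) s.
Proof. by elim: s => //= i s ->. Qed.

Lemma compatible_choice_complete pairs ps chosen ls :
  all2 (fun s P => s \in P) ls ps ->
  {in chosen ++ ls &, forall s t, compatible pairs s t} ->
  compatible_choice pairs ps chosen.
Proof.
elim: ps chosen ls => [|P ps IH] chosen [|s ls] //= /andP [sP lsps] comp.
apply/hasP; exists s => //; apply/andP; split.
  by apply/allP => t tc; apply: comp; rewrite mem_cat ?inE ?eqxx ?tc ?orbT.
have moved u : u \in (s :: chosen) ++ ls -> u \in chosen ++ s :: ls.
  by rewrite !mem_cat !inE => /orP [/orP [] | ] ->; rewrite ?orbT.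
by apply: IH lsps _ => t u /moved tin /moved uin; apply: comp.
Qed.

Lemma lt9_cases a : a < 9 -> [\/ a < 7, a = 7 | a = 8].
Proof. by do 9?[case: a => [|a] //]; move=> _; constructor. Qed.

Section HoleNeighbourhood.

Variables (T : finType) (e : rel T) (c : 'I_7 -> T).
Hypotheses (eS : simple_graph e) (P7free : H_free e (path_adj 7))
  (C4free : H_free e (cycle_adj 4)) (gemfree : H_free e gem_adj)
  (hole : induced_copy e (cycle_adj 7) c).

Definition hv (j : nat) : T := c (inord j).

Definition outside (x : T) : bool := [forall j, x != c j].

Definition trace (x : T) : seq bool := [seq e x (hv j) | j <- iota 0 7].

Lemma c_hv (i : 'I_7) : c i = hv i.
Proof. by rewrite /hv inord_val. Qed.

Lemma hv_edge a b : a < 7 -> b < 7 -> e (hv a) (hv b) = hole7 a b.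
Proof. by move=> alt blt; rewrite /hv hole.2 /cycle_adj !inordK. Qed.

Lemma hv_inj a b : a < 7 -> b < 7 -> hv a = hv b -> a = b.
Proof. by move=> alt blt /hole.1 /(congr1 val); rewrite /= !inordK. Qed.

Lemma outside_hv x a : outside x -> x != hv a.
Proof. by move/forallP; apply. Qed.

Lemma not_outside x : ~~ outside x -> exists2 j, j < 7 & x = hv j.
Proof. by case/forallPn => j /negPn /eqP ->; exists j; rewrite ?c_hv. Qed.

Lemma nth_trace x j : j < 7 -> nth false (trace x) j = e x (hv j).
Proof. by move=> jlt; rewrite (nth_map 0) ?size_iota // nth_iota. Qed.

Definition config_vertices (xs : seq T) : seq T := [seq hv j | j <- iota 0 7] ++ xs.

Lemma size_config_vertices xs : size (config_vertices xs) = 7 + size xs.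
Proof. by rewrite size_cat size_map size_iota. Qed.

Lemma nth_config_vertices x0 xs a :
  nth x0 (config_vertices xs) a = if a < 7 then hv a else nth x0 xs (a - 7).
Proof.
rewrite nth_cat size_map size_iota; case: ifP => // alt.
by rewrite (nth_map 0) ?size_iota // nth_iota.
Qed.

Lemma config_vertices_uniq xs : uniq xs -> all outside xs -> uniq (config_vertices xs).
Proof.
move=> xsU /allP xsO; rewrite cat_uniq xsU andbT; apply/andP; split.
  rewrite map_inj_in_uniq ?iota_uniq // => a b.
  by rewrite !mem_iota !add0n; apply: hv_inj.
apply/hasPn => x /xsO ox; apply/mapP => [[j _ xj]].
by move: (outside_hv j ox); rewrite xj eqxx.
Qed.

Lemma config_edges x y a b : a < 9 -> b < 9 ->
  e (nth x (config_vertices [:: x; y]) a) (nth x (config_vertices [:: x; y]) b) =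
  config (trace x) (trace y) (e x y) a b.
Proof.
have [eSym eIrr] := eS; rewrite !nth_config_vertices /config => alt blt.
by case: (lt9_cases alt) => [a7 | -> | ->]; case: (lt9_cases blt) => [b7 | -> | ->];
  rewrite ?a7 ?b7 /= ?nth_trace ?hv_edge ?eIrr // eSym.
Qed.

Lemma trace_admissible x : outside x -> trace x \in admissible_traces.
Proof.
move=> ox; rewrite /admissible_traces mem_filter.
have -> : bitseqs 7 = bitseqs (size (trace x)) by rewrite size_map size_iota.
rewrite bitseqs_complete andbT.
have [_ eIrr] := eS.
(* Read with default x, the hole plus x agrees with the hole plus x, x. *)
have single a : nth x (config_vertices [:: x]) a = nth x (config_vertices [:: x; x]) a.
  rewrite !nth_config_vertices; case: ifP => // _.
  by case: (a - 7) => [|[|k]] /=; rewrite ?nth_nil.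
have <- : size (config_vertices [:: x]) = 8 by rewrite size_config_vertices.
rewrite -(eIrr x).
apply: (pattern_free_realized eS P7free C4free gemfree (x0 := x)); split.
  by apply: config_vertices_uniq; rewrite //= ox.
by move=> a b alt blt; rewrite !single config_edges // (leq_trans alt, leq_trans blt).
Qed.

Lemma pair_admissible x y : outside x -> outside y -> x != y ->
  (trace x, trace y, e x y) \in admissible_pairs.
Proof.
move=> ox oy xy; rewrite /admissible_pairs /admissible_pairs_over mem_filter.
apply/andP; split; last first.
  apply: (allpairs_f (fun st b => (st, b))); last by case: (e x y).
  by apply: allpairs_f; apply: trace_admissible.
have <- : size (config_vertices [:: x; y]) = 9 by rewrite size_config_vertices.
apply: (pattern_free_realized eS P7free C4free gemfree (x0 := x)); split.
  by apply: config_vertices_uniq; rewrite /= ?inE ?xy ?ox ?oy.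
by move=> a b alt blt; rewrite config_edges.
Qed.

Lemma traces_compatible x y : outside x -> outside y ->
  compatible admissible_pairs (trace x) (trace y).
Proof.
move=> ox oy; rewrite /compatible; have [-> | xy] := eqVneq x y; first by rewrite eqxx.
by have := pair_admissible ox oy xy; case: (e x y) => ->; rewrite ?orbT.
Qed.

Lemma common_neighbour_outside i j x : i < 7 -> j < 7 -> hole7 i j ->
  e x (hv i) -> e x (hv j) -> outside x.
Proof.
move=> ilt jlt ij xi xj; apply/negPn/negP => /not_outside [l llt xl].
rewrite xl !hv_edge // in xi xj.
exact: (hole7_no_common_neighbour ilt jlt llt ij xi xj).
Qed.

Lemma hole_edge_clique i j x y : i < 7 -> j < 7 -> hole7 i j ->
  e x (hv i) -> e x (hv j) -> e y (hv i) -> e y (hv j) -> x != y -> e x y.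
Proof.
move=> ilt jlt ij xi xj yi yj xy.
have ox := common_neighbour_outside ilt jlt ij xi xj.
have oy := common_neighbour_outside ilt jlt ij yi yj.
have [ok _] := andP certificate.
by apply: (edge_cliquesP ok (pair_admissible ox oy xy) ilt jlt ij); rewrite nth_trace.
Qed.

Lemma no_private_system :
  ~ (forall i, i < 7 -> exists2 x, outside x & private_to i (trace x)).
Proof.
move=> privP.
have /fin_all_exists [pick pickP] :
    forall i : 'I_7, exists x, outside x && private_to i (trace x).
  by move=> i; have [x ox px] := privP i (ltn_ord i); exists x; rewrite ox px.
pose p i := pick (inord i).
have p_out i : outside (p i) by case/andP: (pickP (inord i)).
have p_private i : i < 7 -> trace (p i) \in [seq s <- admissible_traces | private_to i s].
  move=> ilt; have /andP [o pr] := pickP (inord i).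
  by rewrite inordK // in pr; rewrite mem_filter pr trace_admissible.
have [_ /negP] := andP certificate; apply.
apply: (compatible_choice_complete (ls := [seq trace (p i) | i <- iota 0 7])).
  rewrite /private_classes all2_map_same; apply/allP => i.
  by rewrite mem_iota add0n; apply: p_private.
by move=> _ _ /mapP [i _ ->] /mapP [j _ ->]; apply: traces_compatible; apply: p_out.
Qed.

Lemma bisimplicial_without_private k : k < 7 ->
  (forall x, outside x -> ~~ private_to k (trace x)) -> bisimplicial e (hv k).
Proof.
move=> klt noP; have [eSym _] := eS.
have /and4P [kp kq plt qlt] := hole7_prev_next klt.
pose side j := [set x | (x == hv j) || (e (hv k) x && e x (hv j))].
have side_clique j : j < 7 -> hole7 k j -> clique e (side j).
  move=> jlt kj x y; rewrite !inE.
  case/orP => [/eqP -> | /andP [kx xj]]; case/orP => [/eqP -> | /andP [ky yj]] xy.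
  - by rewrite eqxx in xy.
  - by rewrite eSym.
  - exact: xj.
  - by apply: (hole_edge_clique klt jlt kj); rewrite // eSym.
exists (side (prev7 k)), (side (next7 k)).
split; [exact: side_clique | split; [exact: side_clique |]].
apply/setP => x; rewrite /nbhd !inE; apply/idP/idP => [kx | ].
  have [ox | /not_outside [j jlt xj]] := boolP (outside x).
    move: (noP x ox); rewrite /private_to !nth_trace // eSym kx /= negb_and !negbK.
    by case/orP => ->; rewrite ?orbT.
  subst x; rewrite hv_edge // in kx.
  by case/orP: (hole7_neighbours klt jlt kx) => /eqP ->; rewrite eqxx ?orbT.
by case/orP => /orP [/eqP -> | /andP [] //]; rewrite hv_edge.
Qed.

End HoleNeighbourhood.

Theorem mainTheorem10 (T : finType) (e : rel T) :
  simple_graph e ->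
  H_free e (path_adj 7) ->
  H_free e (cycle_adj 4) ->
  H_free e gem_adj ->
  forall c : 'I_7 -> T, induced_copy e (cycle_adj 7) c ->
  exists i : 'I_7, bisimplicial e (c i).
Proof.
move=> eS P7free C4free gemfree c hole.
pose without_private (k : 'I_7) :=
  [forall x, outside c x ==> ~~ private_to k (trace e c x)].
have [k /forallP kP | noneP] := pickP without_private.
  exists k; rewrite c_hv.
  apply: (bisimplicial_without_private eS P7free C4free gemfree hole) => //.
  by move=> x; apply/implyP/kP.
case: (no_private_system eS P7free C4free gemfree hole) => i ilt.
have /negbT /forallPn [x] := noneP (Ordinal ilt).
by rewrite negb_imply negbK => /andP [ox px]; exists x.
Qed.
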